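(* Let $p\in\mathbb P^2(\mathbb R)$ and let $l$ be a real line through $p$; fix affine coordinates centered at $p$ in which $l=\{y=0\}$. Let $f\in F_{(p,l)}$ and $g\in I_{(p,l)}$. If $\operatorname{ord}_p(f)=2$ and $D_f''(0)\neq0$, then there exist a neighborhood $U\subseteq\mathbb P^2(\mathbb R)$ of $p$ and $\epsilon>0$ such that $f+\epsilon g$ is nonnegative on $U$.
   Context: $H_k\subseteq\mathbb R[x,y,z]$ is the space of real ternary forms of degree $k$; $P_{3,4}=\{f\in H_4: f\ge0 \text{ on }\mathbb P^2(\mathbb R)\}$. Local notation. For $p\in\mathbb P^2(\mathbb R)$, affine coordinates centered at $p$ are obtained by an invertible real linear change of coordinates sending $p$ to $(0:0:1)$ followed by setting $z=1$; $f\in H_4$ becomes $f(x,y)=\sum_{i+j\le4}a_{ij}x^iy^j=f_0+\dots+f_4$ ($f_k$ homogeneous of degree $k$), and $\operatorname{ord}_p(f)$ is the least $k$ with $f_k\ne0$. For $\operatorname{ord}_pf\ge2$ put $\tilde f(x,y)=f(x,xy)/x^2=f_2(1,y)+xf_3(1,y)+x^2f_4(1,y)$. The discriminant of $f$ at $p$ is $D_f(y)=(f_3^2-4f_2f_4)(1,y)\in\mathbb R[y]$ (the discriminant of $\tilde f$ viewed as a quadratic polynomial in $x$). With coordinates centered at $p$ and $l=\{y=0\}$: $F_{(p,l)}=\{f\in P_{3,4}: f(p)=0,\ \tilde f(0,0)=0\}$ and $I_{(p,l)}=\{f\in H_4: a_{00}=a_{10}=a_{01}=a_{20}=a_{11}=a_{30}=0\}$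 (equivalently $\operatorname{ord}_pf\ge2$ and $\operatorname{ord}_{(0,0)}\tilde f\ge2$). *)

(* A real ternary quartic form, written in affine
   coordinates centered at p = (0:0:1) with l = {y = 0}, is given by its
   coefficient table a : nat -> nat -> R, where a i j is the coefficient of
   x^i y^j z^(4-i-j) (only entries with i + j <= 4 are used). *)
From HB Require Import structures.
From mathcomp Require Import all_boot all_order all_algebra.
Set Implicit Arguments. Unset Strict Implicit. Unset Printing Implicit Defensive.
Import Order.TTheory GRing.Theory Num.Theory.
Local Open Scope ring_scope.

Section Forms.
Variable R : rcfType.

Definition feval (a : nat -> nat -> R) (x y z : R) : R :=
  \sum_(i < 5) \sum_(j < 5 | (i + j <= 4)%N)
     a i j * x ^+ i * y ^+ j * z ^+ (4 - i - j).

Definition psd4 (a : nat -> nat -> R) : Prop :=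
  forall x y z : R, 0 <= feval a x y z.

(* f_k(1,y) as a univariate polynomial in y *)
Definition hpart (a : nat -> nat -> R) (k : nat) : {poly R} :=
  \sum_(j < k.+1) a (k - j)%N j *: 'X^j.

Definition tildef (a : nat -> nat -> R) (x y : R) : R :=
  (hpart a 2).[y] + x * (hpart a 3).[y] + x ^+ 2 * (hpart a 4).[y].

Definition discf (a : nat -> nat -> R) : {poly R} :=
  hpart a 3 ^+ 2 - 4%:R *: (hpart a 2 * hpart a 4).

Definition hzero (a : nat -> nat -> R) (k : nat) : Prop :=
  forall i, (i <= k)%N -> a i (k - i)%N = 0.

Definition ordp_eq (a : nat -> nat -> R) (n : nat) : Prop :=
  (forall k, (k < n)%N -> hzero a k) /\ ~ hzero a n.

Definition inF (a : nat -> nat -> R) : Prop :=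
  psd4 a /\ a 0%N 0%N = 0 /\ tildef a 0 0 = 0.

Definition inI (b : nat -> nat -> R) : Prop :=
  b 0%N 0%N = 0 /\ b 1%N 0%N = 0 /\ b 0%N 1%N = 0 /\
  b 2%N 0%N = 0 /\ b 1%N 1%N = 0 /\ b 3%N 0%N = 0.

End Forms.

From HB Require Import structures.
From mathcomp Require Import all_boot all_order all_algebra.
From mathcomp Require Import ring lra.
Set Implicit Arguments.
Unset Strict Implicit.
Unset Printing Implicit Defensive.
Import Order.TTheory GRing.Theory Num.Theory.
Local Open Scope ring_scope.

(* Give x weight 1 and y weight 2.
   1. Nonnegativity of f on the lines through p and on the line l forces the
      coefficients a11 and a30 to vanish; together with f(p) = 0, ord_p f = 2
      and tilde f(0,0) = 0 this puts f in I_(p,l), and ord_p f = 2 then forces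
      a02 > 0.  Every monomial of f or g then has weight at least 4.
   2. The weight-4 ("principal") part a02 y^2 + a21 x^2 y + a40 x^4 of f is
      nonnegative: restrict f to the parabolas y = t x^2 and let x -> 0.  Hence
      a21^2 <= 4 a02 a40, and since D_f''(0) = 2 (a21^2 - 4 a02 a40) != 0 the
      principal part is positive definite as a quadratic form in (x^2, y).
   3. Put S = x^4 + y^2.  The principal part of f is >= m S for some m > 0,
      the principal part of g is >= - L S, and on the box |x|, |y| < delta
      every monomial of weight >= 5 is <= delta S in absolute value.
      Choosing eps, then delta, small enough gives f + eps g >= 0 on the box. *)

Section RealInequalities.
Variable R : rcfType.

Lemma nonneg_affine_slope (c d : R) : (forall t, 0 <= c * t + d) -> c = 0.
Proof.
move=> H; apply/eqP; apply/negPn/negP => c_neq0.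
have := H (- (`|d| + 1) / c).
rewrite (_ : c * (- (`|d| + 1) / c) = - (`|d| + 1)); last by field.
have := ler_norm d; lra.
Qed.

Lemma nonneg_quadratic_lead (A B C : R) :
  (forall z, 0 <= A * z ^+ 2 + B * z + C) -> 0 <= A.
Proof.
move=> H; rewrite leNgt; apply/negP => A_lt0.
set w := (`|B| + `|C|) / (- A).
have w_ge0 : 0 <= w by rewrite /w divr_ge0 // ?addr_ge0 // oppr_ge0 ltW.
have Aw : A * w = - (`|B| + `|C|) by rewrite /w; field; rewrite lt_eqF.
have := H (1 + w).
have hB : B * (1 + w) <= `|B| * (1 + w) by rewrite ler_wpM2r ?ler_norm // addr_ge0.
have hC : C <= `|C| * (1 + w).
  by apply: le_trans (ler_norm C) _; rewrite ler_peMr //; lra.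
have hA : A * (1 + w) < 0 by rewrite pmulr_llt0 //; lra.
rewrite (_ : A * (1 + w) ^+ 2 = (A + A * w) * (1 + w)); last ring.
rewrite Aw; nra.
Qed.

Lemma nonneg_quadratic_disc (A B C : R) :
  0 < A -> (forall t, 0 <= A * t ^+ 2 + B * t + C) -> B ^+ 2 <= 4 * A * C.
Proof.
move=> A_gt0 H; have := H (- B / (2 * A)).
have -> : A * (- B / (2 * A)) ^+ 2 + B * (- B / (2 * A)) + C
          = (4 * A * C - B ^+ 2) / (4 * A) by field; lra.
by rewrite pmulr_lge0 ?invr_gt0 ?subr_ge0 //; lra.
Qed.

Lemma quartic_neg_near0 (c0 c1 c2 c3 c4 : R) : c0 < 0 ->
  exists x, 0 < x /\ c0 + c1 * x + c2 * x ^+ 2 + c3 * x ^+ 3 + c4 * x ^+ 4 < 0.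
Proof.
move=> c0_lt0.
set M := `|c1| + `|c2| + `|c3| + `|c4|.
have M_ge0 : 0 <= M by rewrite /M !addr_ge0.
have den_gt0 : 0 < 2 * (M - c0) by lra.
set x := - c0 / (2 * (M - c0)).
have x_gt0 : 0 < x by rewrite /x divr_gt0 //; lra.
have x_le1 : x <= 1 by rewrite /x ler_pdivrMr //; lra.
have xM : x * M <= - c0 / 2.
  by rewrite /x mulrAC ler_pdivrMr // -mulrA ler_wpM2l //; lra.
exists x; split => //.
have small k (c : R) : (0 < k)%N -> c * x ^+ k <= `|c| * x.
  move=> k_gt0; apply: le_trans (ler_norm _) _.
  rewrite normrM normrX (ger0_norm (ltW x_gt0)) ler_wpM2l //.
  by rewrite -[leRHS]expr1 ler_wiXn2l // ltW.
have := small 1%N c1 isT; have := small 2%N c2 isT.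
have := small 3%N c3 isT; have := small 4%N c4 isT.
rewrite expr1; move: xM; rewrite /M; nra.
Qed.

Lemma ge_neg_norm_mul (c h T : R) : `|h| <= T -> - (`|c| * T) <= c * h.
Proof.
move=> hT; have := ler_norm (- (c * h)); rewrite normrN normrM.
have : `|c| * `|h| <= `|c| * T by apply: ler_wpM2l.
lra.
Qed.

Definition posdef_const (A B C : R) : R := (4 * A * C - B ^+ 2) / (4 * (A + C)).

Lemma posdef_const_gt0 (A B C : R) :
  0 < A -> B ^+ 2 < 4 * A * C -> 0 < posdef_const A B C.
Proof.
move=> A_gt0 disc_lt0; have C_gt0 : 0 < C by nra.
by rewrite /posdef_const divr_gt0 //; lra.
Qed.

Lemma posdef_binary_form (A B C X Y : R) : 0 < A -> B ^+ 2 < 4 * A * C ->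
  posdef_const A B C * (X ^+ 2 + Y ^+ 2) <= A * Y ^+ 2 + B * X * Y + C * X ^+ 2.
Proof.
move=> A_gt0 disc_lt0; have C_gt0 : 0 < C by nra.
rewrite /posdef_const mulrAC ler_pdivrMr; last lra.
have := sqr_ge0 (2 * A * Y + B * X); have := sqr_ge0 (2 * C * X + B * Y).
nra.
Qed.

(* On the box |u|, |v| < d <= 1 every monomial u^i v^j of weight i + 2 j >= 5
   occurring in a quartic is bounded by d (u^4 + v^2). *)
Lemma weighted_monomials_small (d u v : R) :
  0 <= u -> 0 <= v -> u < d -> v < d -> d <= 1 ->
  let S := u ^+ 4 + v ^+ 2 in
  [/\ u * v ^+ 2 <= d * S, v ^+ 3 <= d * S, u ^+ 3 * v <= d * S,
      u ^+ 2 * v ^+ 2 <= d * S & u * v ^+ 3 <= d * S /\ v ^+ 4 <= d * S].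
Proof.
move=> u_ge0 v_ge0 ud vd d_le1 S.
have u4 : 0 <= u ^+ 4 by rewrite exprn_ge0.
have v2 : 0 <= v ^+ 2 by rewrite exprn_ge0.
have u_le1 : u <= 1 by lra.
have v_le1 : v <= 1 by lra.
have dv2 : v * v ^+ 2 <= d * S by rewrite /S; nra.
have du2 : u * v ^+ 2 <= d * S by rewrite /S; nra.
have u2v : u ^+ 2 * v <= S by rewrite /S; have := sqr_ge0 (u ^+ 2 - v); nra.
split => //.
- rewrite (_ : u ^+ 3 * v = u * (u ^+ 2 * v)); last ring.
  have S_ge0 : 0 <= S by rewrite /S addr_ge0.
  apply: le_trans (_ : u * S <= _); [apply: ler_wpM2l | apply: ler_wpM2r]; lra.
- apply: le_trans du2.
  by rewrite (_ : u ^+ 2 * v ^+ 2 = u * (u * v ^+ 2)) ?ler_piMl ?mulr_ge0 //; ring.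
- split; [apply: le_trans du2 | apply: le_trans dv2].
  + by rewrite (_ : u * v ^+ 3 = v * (u * v ^+ 2)) ?ler_piMl ?mulr_ge0 //; ring.
  + by rewrite (_ : v ^+ 4 = v * (v * v ^+ 2)) ?ler_piMl ?mulr_ge0 //; ring.
Qed.

End RealInequalities.

Section Coefficients.
Variable R : rcfType.
Implicit Types (a : nat -> nat -> R) (x y z : R).

Lemma feval_expand a x y z :
  feval a x y z =
  a 0%N 0%N * z ^+ 4 + a 1%N 0%N * x * z ^+ 3 + a 0%N 1%N * y * z ^+ 3
  + a 2%N 0%N * x ^+ 2 * z ^+ 2 + a 1%N 1%N * x * y * z ^+ 2
  + a 0%N 2%N * y ^+ 2 * z ^+ 2
  + a 3%N 0%N * x ^+ 3 * z + a 2%N 1%N * x ^+ 2 * y * z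
  + a 1%N 2%N * x * y ^+ 2 * z + a 0%N 3%N * y ^+ 3 * z
  + a 4%N 0%N * x ^+ 4 + a 3%N 1%N * x ^+ 3 * y + a 2%N 2%N * x ^+ 2 * y ^+ 2
  + a 1%N 3%N * x * y ^+ 3 + a 0%N 4%N * y ^+ 4.
Proof.
rewrite /feval; under eq_bigr do rewrite big_mkcond.
by rewrite !big_ord_recr !big_ord0 /=; ring.
Qed.

Lemma hpart_expand a :
  [/\ hpart a 2 = a 2%N 0%N *: 1 + a 1%N 1%N *: 'X + a 0%N 2%N *: 'X^2,
      hpart a 3 = a 3%N 0%N *: 1 + a 2%N 1%N *: 'X + a 1%N 2%N *: 'X^2
                  + a 0%N 3%N *: 'X^3 &
      hpart a 4 = a 4%N 0%N *: 1 + a 3%N 1%N *: 'X + a 2%N 2%N *: 'X^2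
                  + a 1%N 3%N *: 'X^3 + a 0%N 4%N *: 'X^4].
Proof. by rewrite /hpart !big_ord_recr !big_ord0 /= !add0r expr0 expr1. Qed.

Lemma tildef_origin a : tildef a 0 0 = a 2%N 0%N.
Proof.
rewrite /tildef; have [-> _ _] := hpart_expand a.
by rewrite !hornerE /= expr0n /= !mul0r !mulr0 !addr0.
Qed.

Lemma discf_second_derivative a :
  (discf a)^`(2).[0] = 2 * (2 * a 3%N 0%N * a 1%N 2%N + a 2%N 1%N ^+ 2
     - 4 * (a 2%N 0%N * a 2%N 2%N + a 1%N 1%N * a 3%N 1%N + a 0%N 2%N * a 4%N 0%N)).
Proof.
rewrite horner_coef0 coef_derivn /discf coefB coefZ expr2 !coefM.
rewrite !big_ord_recr !big_ord0 /=.
have [-> -> ->] := hpart_expand a.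
rewrite !coefE /= (_ : ((2 + 0) ^_ 2 = 2)%N) //; ring.
Qed.

End Coefficients.

Section NonnegativeQuartics.
Variable R : rcfType.
Implicit Types (a : nat -> nat -> R) (x y z t : R).

Lemma psd4_at a x y z v : psd4 a -> feval a x y z = v -> 0 <= v.
Proof. by move=> psd <-. Qed.

(* If f vanishes to order two at p, the quadratic part f_2 is nonnegative:
   it is the leading coefficient of f(x, y, z) as a polynomial in z. *)
Lemma psd4_quadratic_part a x y :
  psd4 a -> a 0%N 0%N = 0 -> a 1%N 0%N = 0 -> a 0%N 1%N = 0 ->
  0 <= a 2%N 0%N * x ^+ 2 + a 1%N 1%N * x * y + a 0%N 2%N * y ^+ 2.
Proof.
move=> psd a00 a10 a01.
apply: (@nonneg_quadratic_lead _ _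
  (a 3%N 0%N * x ^+ 3 + a 2%N 1%N * x ^+ 2 * y + a 1%N 2%N * x * y ^+ 2
   + a 0%N 3%N * y ^+ 3)
  (a 4%N 0%N * x ^+ 4 + a 3%N 1%N * x ^+ 3 * y + a 2%N 2%N * x ^+ 2 * y ^+ 2
   + a 1%N 3%N * x * y ^+ 3 + a 0%N 4%N * y ^+ 4)) => z.
apply: (psd4_at (x:=x) (y:=y) (z:=z) psd).
by rewrite feval_expand a00 a10 a01; ring.
Qed.

(* If the restriction of f to l vanishes to order three at p, it vanishes to
   order four: f(1, 0, z) = a30 z + a40 is affine in z and nonnegative. *)
Lemma psd4_cubic_on_line a :
  psd4 a -> a 0%N 0%N = 0 -> a 1%N 0%N = 0 -> a 2%N 0%N = 0 -> a 3%N 0%N = 0.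
Proof.
move=> psd a00 a10 a20; apply: (@nonneg_affine_slope _ _ (a 4%N 0%N)) => z.
apply: (psd4_at (x:=1) (y:=0) (z:=z) psd).
by rewrite feval_expand a00 a10 a20; ring.
Qed.

Lemma inF_ord2_inI a : inF a -> ordp_eq a 2 -> inI a /\ 0 < a 0%N 2%N.
Proof.
move=> [psd [a00 tilde0]] [low not_f2_zero].
have a01 : a 0%N 1%N = 0 := low 1%N isT 0%N isT.
have a10 : a 1%N 0%N = 0 := low 1%N isT 1%N isT.
have a20 : a 2%N 0%N = 0 by rewrite -tildef_origin.
have f2_ge0 t y := psd4_quadratic_part t y psd a00 a10 a01.
have a11 : a 1%N 1%N = 0.
  apply: (@nonneg_affine_slope _ _ (a 0%N 2%N)) => t.
  by have := f2_ge0 t 1; rewrite a20 mul0r add0r expr1n !mulr1.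
have a02_ge0 : 0 <= a 0%N 2%N.
  by have := f2_ge0 0 1; rewrite a20 a11 !mul0r !add0r expr1n mulr1.
have a02_neq0 : a 0%N 2%N != 0.
  apply/eqP => a02; apply: not_f2_zero.
  by move=> -[|[|[|i]]] //= _; rewrite ?a02 ?a11 ?a20.
have a30 := psd4_cubic_on_line psd a00 a10 a20.
by split; [do !split | rewrite lt_def a02_neq0].
Qed.

(* Restricting f in I_(p,l) to the parabolas y = t x^2 shows that its
   weight-four part is nonnegative: f(x, t x^2) = x^4 (q(t) + O(x)) with
   q(t) = a02 t^2 + a21 t + a40. *)
Lemma psd4_principal_part a t :
  psd4 a -> inI a -> 0 <= a 0%N 2%N * t ^+ 2 + a 2%N 1%N * t + a 4%N 0%N.
Proof.
move=> psd [a00 [a10 [a01 [a20 [a11 a30]]]]].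
rewrite leNgt; apply/negP => q_lt0.
have [x [x_gt0 neg]] := quartic_neg_near0
  (a 1%N 2%N * t ^+ 2 + a 3%N 1%N * t) (a 0%N 3%N * t ^+ 3 + a 2%N 2%N * t ^+ 2)
  (a 1%N 3%N * t ^+ 3) (a 0%N 4%N * t ^+ 4) q_lt0.
have : 0 <= x ^+ 4 * (a 0%N 2%N * t ^+ 2 + a 2%N 1%N * t + a 4%N 0%N
     + (a 1%N 2%N * t ^+ 2 + a 3%N 1%N * t) * x
     + (a 0%N 3%N * t ^+ 3 + a 2%N 2%N * t ^+ 2) * x ^+ 2
     + (a 1%N 3%N * t ^+ 3) * x ^+ 3 + (a 0%N 4%N * t ^+ 4) * x ^+ 4).
  apply: (psd4_at (x:=x) (y:=t * x ^+ 2) (z:=1) psd).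
  by rewrite feval_expand a00 a10 a01 a20 a11 a30; ring.
by rewrite pmulr_rge0 ?exprn_gt0 // leNgt neg.
Qed.

End NonnegativeQuartics.

Section LocalEstimates.
Variable R : rcfType.
Implicit Types (a b : nat -> nat -> R) (x y : R).

Definition wnorm x y : R := x ^+ 4 + y ^+ 2.

(* The weight-four part and the part of weight >= 5 of a form in I_(p,l),
   with the sums of absolute values of their coefficients. *)
Definition principal a x y : R :=
  a 0%N 2%N * y ^+ 2 + a 2%N 1%N * x ^+ 2 * y + a 4%N 0%N * x ^+ 4.

Definition tail a x y : R :=
  a 1%N 2%N * (x * y ^+ 2) + a 0%N 3%N * y ^+ 3 + a 3%N 1%N * (x ^+ 3 * y)
  + a 2%N 2%N * (x ^+ 2 * y ^+ 2) + a 1%N 3%N * (x * y ^+ 3) + a 0%N 4%N * y ^+ 4.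

Definition principal_size a : R := `|a 0%N 2%N| + `|a 2%N 1%N| + `|a 4%N 0%N|.

Definition tail_size a : R :=
  `|a 1%N 2%N| + `|a 0%N 3%N| + `|a 3%N 1%N| + `|a 2%N 2%N| + `|a 1%N 3%N|
  + `|a 0%N 4%N|.

Lemma principal_size_ge0 a : 0 <= principal_size a.
Proof. by rewrite !addr_ge0. Qed.

Lemma tail_size_ge0 a : 0 <= tail_size a.
Proof. by rewrite !addr_ge0. Qed.

Lemma feval_inI a x y : inI a -> feval a x y 1 = principal a x y + tail a x y.
Proof.
move=> [a00 [a10 [a01 [a20 [a11 a30]]]]].
by rewrite feval_expand a00 a10 a01 a20 a11 a30 /principal /tail; ring.
Qed.

Lemma principal_ge_posdef a x y :
  0 < a 0%N 2%N -> a 2%N 1%N ^+ 2 < 4 * a 0%N 2%N * a 4%N 0%N ->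
  posdef_const (a 0%N 2%N) (a 2%N 1%N) (a 4%N 0%N) * wnorm x y <= principal a x y.
Proof.
move=> a02_gt0 disc_lt0.
have := posdef_binary_form (x ^+ 2) y a02_gt0 disc_lt0.
by rewrite /wnorm /principal -exprM.
Qed.

Lemma principal_ge_size a x y : - (principal_size a * wnorm x y) <= principal a x y.
Proof.
have x4 : 0 <= x ^+ 4 by rewrite exprn_even_ge0.
have y2 : 0 <= y ^+ 2 by rewrite exprn_even_ge0.
have y2_le : `|y ^+ 2| <= wnorm x y by rewrite ger0_norm // /wnorm; lra.
have x4_le : `|x ^+ 4| <= wnorm x y by rewrite ger0_norm // /wnorm; lra.
have x2y_le : `|x ^+ 2 * y| <= wnorm x y.
  rewrite /wnorm normrM (_ : x ^+ 4 = `|x ^+ 2| ^+ 2); last first.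
    by rewrite real_normK ?num_real // -exprM.
  rewrite -[y ^+ 2]real_normK ?num_real //.
  have := sqr_ge0 (`|x ^+ 2| - `|y|); have := normr_ge0 (x ^+ 2).
  have := normr_ge0 y; nra.
have := ge_neg_norm_mul (a 0%N 2%N) y2_le; have := ge_neg_norm_mul (a 4%N 0%N) x4_le.
have := ge_neg_norm_mul (a 2%N 1%N) x2y_le.
by rewrite /principal /principal_size mulrA; lra.
Qed.

Lemma tail_ge a d x y : 0 < d -> d <= 1 -> `|x| < d -> `|y| < d ->
  - (tail_size a * (d * wnorm x y)) <= tail a x y.
Proof.
move=> d_gt0 d_le1 xd yd.
have [h1 h2 h3 h4 [h5 h6]] :=
  weighted_monomials_small (normr_ge0 x) (normr_ge0 y) xd yd d_le1.
have eS : `|x| ^+ 4 + `|y| ^+ 2 = wnorm x y.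
  by rewrite /wnorm -!normrX !ger0_norm ?exprn_even_ge0.
rewrite /= eS -!normrX -!normrM in h1 h2 h3 h4 h5 h6.
have := ge_neg_norm_mul (a 1%N 2%N) h1; have := ge_neg_norm_mul (a 0%N 3%N) h2.
have := ge_neg_norm_mul (a 3%N 1%N) h3; have := ge_neg_norm_mul (a 2%N 2%N) h4.
have := ge_neg_norm_mul (a 1%N 3%N) h5; have := ge_neg_norm_mul (a 0%N 4%N) h6.
by rewrite /tail /tail_size; lra.
Qed.

Lemma local_positivity a b : inI a -> inI b ->
  0 < a 0%N 2%N -> a 2%N 1%N ^+ 2 < 4 * a 0%N 2%N * a 4%N 0%N ->
  exists delta : R, 0 < delta /\ exists eps : R, 0 < eps /\
    forall x y : R, `|x| < delta -> `|y| < delta ->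
      0 <= feval a x y 1 + eps * feval b x y 1.
Proof.
move=> aI bI a02_gt0 disc_lt0.
set m := posdef_const (a 0%N 2%N) (a 2%N 1%N) (a 4%N 0%N).
have m_gt0 : 0 < m := posdef_const_gt0 a02_gt0 disc_lt0.
(* eps makes eps * (principal part of g) >= - (m/2) S; delta then makes both
   tails together >= - (m/2) S on the box. *)
have L_ge0 := principal_size_ge0 b.
set eps := m / (2 * (principal_size b + 1)).
have eps_gt0 : 0 < eps by rewrite /eps divr_gt0 //; lra.
have epsL : eps * principal_size b <= m / 2.
  rewrite /eps mulrAC ler_pdivrMr; last lra.
  rewrite (_ : m / 2 * _ = m * principal_size b + m); [lra | by field].
set K := tail_size a + eps * tail_size b.
have K_ge0 : 0 <= K.
  by rewrite addr_ge0 ?tail_size_ge0 // mulr_ge0 ?tail_size_ge0 // ltW.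
set delta := m / (2 * K + m).
have delta_gt0 : 0 < delta by rewrite /delta divr_gt0 //; lra.
have delta_le1 : delta <= 1 by rewrite /delta ler_pdivrMr; lra.
have deltaK : delta * K <= m / 2.
  rewrite /delta mulrAC ler_pdivrMr; last lra.
  rewrite (_ : m / 2 * _ = m * K + m * m / 2); last by field.
  by have := mulr_ge0 (ltW m_gt0) (ltW m_gt0); lra.
exists delta; split => //; exists eps; split => // x y xd yd.
rewrite (feval_inI _ _ aI) (feval_inI _ _ bI).
have S_ge0 : 0 <= wnorm x y by rewrite /wnorm addr_ge0 ?exprn_even_ge0.
have fP := principal_ge_posdef x y a02_gt0 disc_lt0.
have fT := tail_ge a delta_gt0 delta_le1 xd yd.
have gP := ler_wpM2l (ltW eps_gt0) (principal_ge_size b x y).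
have gT := ler_wpM2l (ltW eps_gt0) (tail_ge b delta_gt0 delta_le1 xd yd).
have hL := ler_wpM2r S_ge0 epsL.
have hK := ler_wpM2r S_ge0 deltaK.
rewrite /K in hK; rewrite -/m in fP.
nra.
Qed.

End LocalEstimates.

Theorem mainTheorem3 (R : rcfType) (a b : nat -> nat -> R) :
  inF a -> inI b -> ordp_eq a 2 -> (discf a)^`(2).[0] != 0 ->
  exists delta : R, 0 < delta /\ exists eps : R, 0 < eps /\
    forall x y : R, `|x| < delta -> `|y| < delta ->
      0 <= feval a x y 1 + eps * feval b x y 1.
Proof.
move=> fF gI ord2 disc_neq0.
have [fI a02_gt0] := inF_ord2_inI fF ord2.
apply: (local_positivity fI gI a02_gt0).
have disc_le0 := nonneg_quadratic_disc a02_gt0 (fun t => psd4_principal_part t fF.1 fI).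
rewrite lt_neqAle disc_le0 andbT; apply: contraNneq disc_neq0 => disc_eq0.
move: fI => [_ [_ [_ [a20 [a11 a30]]]]].
rewrite discf_second_derivative a20 a11 a30 disc_eq0; apply/eqP; ring.
Qed.
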